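(* Consider the one-cell system and a single particle in it (apart from particles injected from the baths). Let $\gamma$ be an admissible path and assume the particle starts at time $0$ from $\gamma(0)$ with velocity $v_0\neq0$ directed in the positive direction along $\gamma$ (i.e. along its first segment). Then, whatever the initial angular velocity of the disk, there exists a sequence of particles injected from the baths (drivers), each of which hits the disk once and leaves the cell again, such that the particle follows $\gamma$ to its end in a finite time. In particular, if $\gamma(1)\in\partial\Gamma_{\rm L}\cup\partial\Gamma_{\rm R}$, the particle leaves the cell in finite time.
   Context: Cell geometry. Let $\Gamma_{\rm box}\subset\mathbb{R}^2$ be a bounded connected closed domain such that $(x,y)\in\Gamma_{\rm box}$ implies $x\in[0,L]$. Its boundary is $\partial\Gamma_{\rm box}=\partial\Gamma_{\rm L}\cup\partial\Gamma_{\rm R}\cup\bigcup_{k=1}^b\partial\Gamma_k$, where $\partial\Gamma_{\rm L}=\{(0,y):y\in[-a,a]\}$ and $\partial\Gamma_{\rm R}=\{(L,y):y\in[-a,a]\}$ are the two ''openings'' ($a>0$), and each $\partial\Gamma_k$ is an arc of a circle $C_k$ with center $c_k$, the arcs being oriented so that $\partial\Gamma_{\rm box}$ is everywhere dispersing. In the interior of $\Gamma_{\rm box}$ lies a closed disk $D$ of center $c=(L/2,0)$ and radius $r$ with $\partial D\cap\partial\Gamma_{\rm box}=\emptyset$, and for every $z\in\partial\Gamma_{\rm box}$ the segment $[c,z]$ meets $\partial\Gamma_{\rm box}$ only at $z$. The cell is $\Gamma=\Gamma_{\rm box}\setminus D$; its corners $\partial\Gamma^*$ are the points where two boundary pieces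 meet. Dynamics. Particles move in straight lines inside $\Gamma$ and do not interact with each other. The disk has angular position $\phi$ and angular velocity $\omega$, $\dot\phi=\omega$. At $q\in\partial\Gamma$ write $v=v^{\rm n}e_{\rm n}+v^{\rm t}e_{\rm t}$ (outward normal, tangent). Rules: at the openings the particle leaves the cell; on $\partial\Gamma_{\rm box}\setminus(\partial\Gamma_{\rm L}\cup\partial\Gamma_{\rm R})$, $(v^{\rm n})'=-v^{\rm n}$, $(v^{\rm t})'=v^{\rm t}$; on $\partial D$, $(v^{\rm n})'=-v^{\rm n}$, $(v^{\rm t})'=\omega$, $\omega'=v^{\rm t}$. Heat baths. Particles may be injected at any time through $\partial\Gamma_{\rm L}$ or $\partial\Gamma_{\rm R}$ at any point and with any inward-pointing velocity. Admissible path. A curve $\gamma:[0,1]\to\Gamma$, continuous and piecewise differentiable on $(0,1)$, is admissible if: (1) it consists of finitely many straight segments meeting at $\partial\Gamma$; (2) at each meeting point on $\partial\Gamma_{\rm box}$ the incoming and outgoing angles are equal (specular reflection); (3) only $\gamma(0)$ and $\gamma(1)$ may lie in $\partial\Gamma_{\rm L}\cup\partial\Gamma_{\rm R}$; (4) $\gamma$ never meets a corner of $\partial\Gamma^*$; (5) $\gamma$ is nowhere tangent to $\partial D$. No reflection law is required at meeting points on $\partial D$. *)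

(* Points of the plane are pairs of reals
   (R^o * R^o, so that the product topology of MathComp-Analysis is available
   for interior / closure / connected / closed / bounded_set). *)
From HB Require Import structures.
From mathcomp Require Import all_boot all_order all_algebra.
From mathcomp Require Import all_classical all_reals all_analysis.
Import Order.TTheory GRing.Theory Num.Theory.
Set Implicit Arguments.
Unset Strict Implicit.
Unset Printing Implicit Defensive.
Local Open Scope ring_scope.
Local Open Scope classical_set_scope.

Definition pt (R : realType) := (R^o * R^o)%type.

Definition padd (R : realType) (p q : pt R) : pt R := (p.1 + q.1, p.2 + q.2).
Definition psub (R : realType) (p q : pt R) : pt R := (p.1 - q.1, p.2 - q.2).
Definition pscale (R : realType) (s : R) (p : pt R) : pt R := (s * p.1, s * p.2).
Definition dot (R : realType) (p q : pt R) : R := p.1 * q.1 + p.2 * q.2.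
Definition rot90 (R : realType) (p : pt R) : pt R := (- p.2, p.1).
Definition dist2 (R : realType) (p q : pt R) : R := dot (psub p q) (psub p q).

Definition lerp (R : realType) (p q : pt R) (s : R) : pt R :=
  padd p (pscale s (psub q p)).

Definition bdry (R : realType) (A : set (pt R)) : set (pt R) :=
  closure A `\` interior A.

Definition refl (R : realType) (nv w : pt R) : pt R :=
  psub w (pscale (2 * dot w nv / dot nv nv) nv).

Definition arc (R : realType) (c : pt R) (rho al be : R) : set (pt R) :=
  [set p | exists2 th : R, `[al, be] th &
                           p = padd c (pscale rho (cos th, sin th))].

Record cell (R : realType) := Cell {
  box : set (pt R);
  cL : R;
  ca : R;
  nb : nat;
  cen : nat -> pt R;
  rad : nat -> R;
  alpha : nat -> R;
  beta : nat -> R;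
  rD : R
}.

Section CellDefs.
Variables (R : realType) (C : cell R).

Definition openL : set (pt R) :=
  [set p | p.1 = 0 /\ - ca C <= p.2 <= ca C].
Definition openR : set (pt R) :=
  [set p | p.1 = cL C /\ - ca C <= p.2 <= ca C].
Definition opening : set (pt R) := openL `|` openR.

Definition arck (k : nat) : set (pt R) :=
  arc (cen C k) (rad C k) (alpha C k) (beta C k).

Definition walls : set (pt R) := [set p | exists2 k, (k < nb C)%N & arck k p].

Definition dcen : pt R := (cL C / 2, 0).
Definition diskD : set (pt R) := [set p | dist2 p dcen <= rD C ^+ 2].
Definition circD : set (pt R) := [set p | dist2 p dcen = rD C ^+ 2].

Definition Gam : set (pt R) := box C `&` [set p | rD C ^+ 2 <= dist2 p dcen].
Definition bdGam : set (pt R) := bdry (box C) `|` circD.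
Definition intGam : set (pt R) := Gam `\` bdGam.

Definition corner : set (pt R) :=
  [set z | (openL z /\ walls z) \/ (openR z /\ walls z) \/ (openL z /\ openR z)
        \/ exists j k, [/\ (j < nb C)%N, (k < nb C)%N, j <> k, arck j z & arck k z]].

Definition cell_ok : Prop :=
  [/\ 0 < ca C /\ 0 < rD C,
      [/\ bounded_set (box C), connected (box C), closed (box C)
        & box C !=set0],
      (forall p, box C p -> 0 <= p.1 <= cL C) /\
      (forall p, bdry (box C) p <-> opening p \/ walls p),
      (
      (forall k, (k < nb C)%N ->
         [/\ 0 < rad C k, alpha C k < beta C k & beta C k <= alpha C k + 2 * pi]) /\
      (* dispersing: near every (relatively interior) point of dGamma_k the domain
         lies outside the open disk bounded by C_k *)
      (forall k th, (k < nb C)%N -> alpha C k < th < beta C k ->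
         exists2 eps : R, 0 < eps &
           forall p, box C p ->
             dist2 p (padd (cen C k) (pscale (rad C k) (cos th, sin th))) < eps ->
             rad C k ^+ 2 <= dist2 p (cen C k))) &
      [/\
          diskD `<=` interior (box C),
          circD `&` bdry (box C) = set0 &
          (forall z s, bdry (box C) z -> 0 <= s <= 1 ->
             bdry (box C) (lerp dcen z s) -> lerp dcen z s = z)]].

(* Admissible paths: gamma is given by its vertices P 0, ..., P n       *)
(* (gamma(0) = P 0, gamma(1) = P n), n >= 1 segments [P j, P (j+1)].     *)

Definition admissible (n : nat) (P : nat -> pt R) : Prop :=
  [/\ (0 < n)%N /\
      (forall j, (j <= n)%N -> Gam (P j)),
      (forall j, (j < n)%N -> P j <> P j.+1 /\
         forall s, 0 < s < 1 -> intGam (lerp (P j) (P j.+1) s)),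
      (forall j, (0 < j < n)%N -> bdGam (P j)) /\
      (forall j, (0 < j < n)%N -> bdry (box C) (P j) ->
         forall k, (k < nb C)%N -> arck k (P j) ->
         exists2 lam : R, 0 < lam &
           psub (P j.+1) (P j) = pscale lam (refl (psub (P j) (cen C k))
                                                 (psub (P j) (P j.-1)))),
      (forall j, (0 < j < n)%N -> ~ opening (P j)) /\
      (forall j, (j <= n)%N -> ~ corner (P j)) &
      (forall j, (j <= n)%N -> circD (P j) ->
         ((j < n)%N -> dot (psub (P j.+1) (P j)) (psub (P j) dcen) != 0) /\
         ((0 < j)%N -> dot (psub (P j) (P j.-1)) (psub (P j) dcen) != 0))].

(* A particle trajectory: nodes k = 0..tm, at times tt k, positions qq k;
   on [tt k, tt (k+1)] the particle moves with velocity ww k.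
   Node 0 is the initial (or injection) point, nodes 0 < k < tm are collisions,
   the last node is either an exit through an opening or the end of the
   observation window. *)
Record traj := Traj {
  tm : nat;
  tt : nat -> R;
  qq : nat -> pt R;
  ww : nat -> pt R
}.

(* outward (from Gamma) unit normal and unit tangent at q on dD *)
Definition en (q : pt R) : pt R := pscale (rD C)^-1 (psub dcen q).
Definition et (q : pt R) : pt R := rot90 (en q).

(* collision law at the disk, disk angular velocity om before the collision:
   (v^n)' = - v^n, (v^t)' = om *)
Definition disk_out (q v : pt R) (om : R) : pt R :=
  padd (pscale (- dot v (en q)) (en q)) (pscale om (et q)).

(* incoming tangential velocity: becomes the new angular velocity of the disk *)
Definition disk_vt (q v : pt R) : R := dot v (et q).

(* [ob tau om] : "just before time tau the disk has angular velocity om" *)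
Definition valid_traj (ob : R -> R -> Prop) (H : R) (x : traj) : Prop :=
  [/\ Gam (qq x 0),
      (forall k, (k < tm x)%N ->
         [/\ tt x k < tt x k.+1,
             qq x k.+1 = padd (qq x k) (pscale (tt x k.+1 - tt x k) (ww x k)) &
             forall s, tt x k < s < tt x k.+1 ->
               intGam (padd (qq x k) (pscale (s - tt x k) (ww x k)))]),
      (forall k, (0 < k < tm x)%N ->
         [/\ ~ corner (qq x k), ~ opening (qq x k) &
            (exists2 j, (j < nb C)%N /\ arck j (qq x k) &
               ww x k = refl (psub (qq x k) (cen C j)) (ww x k.-1))
            \/ (circD (qq x k) /\
                exists2 om, ob (tt x k) om & ww x k = disk_out (qq x k) (ww x k.-1) om)]),
      ((0 < tm x)%N /\ opening (qq x (tm x)) \/ tt x (tm x) = H) &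
      tt x (tm x) <= H].

Definition disk_event (N : nat) (xs : nat -> traj) (i k : nat) : Prop :=
  [/\ (i <= N)%N, (0 < k < tm (xs i))%N & circD (qq (xs i) k)].

Definition ev_time (xs : nat -> traj) (i k : nat) : R := tt (xs i) k.
Definition ev_vt (xs : nat -> traj) (i k : nat) : R :=
  disk_vt (qq (xs i) k) (ww (xs i) k.-1).

Definition omega_before (N : nat) (xs : nat -> traj) (om0 tau om : R) : Prop :=
  ((forall i k, disk_event N xs i k -> tau <= ev_time xs i k) /\ om = om0)
  \/ exists i k, [/\ disk_event N xs i k, ev_time xs i k < tau, om = ev_vt xs i k &
        forall i' k', disk_event N xs i' k' -> ev_time xs i' k' < tau ->
                      ev_time xs i' k' <= ev_time xs i k].

(* A valid evolution on [0, H] of the system made of particle 0 and the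
   particles 1..N injected from the baths, with initial disk angular
   velocity om0; no two collisions with the disk are simultaneous. *)
Definition valid_history (om0 H : R) (N : nat) (xs : nat -> traj) : Prop :=
  [/\ (forall i, (i <= N)%N -> valid_traj (omega_before N xs om0) H (xs i)) &
      (forall i k i' k', disk_event N xs i k -> disk_event N xs i' k' ->
         ev_time xs i k = ev_time xs i' k' -> i = i' /\ k = k')].

Definition injected (x : traj) : Prop :=
  0 <= tt x 0 /\
  ((openL (qq x 0) /\ 0 < (ww x 0).1) \/ (openR (qq x 0) /\ (ww x 0).1 < 0)).

Definition driver_ok (N : nat) (xs : nat -> traj) (i : nat) : Prop :=
  [/\ injected (xs i),
      (exists k, disk_event N xs i k /\
         forall k', disk_event N xs i k' -> k' = k),
      (0 < tm (xs i))%N & opening (qq (xs i) (tm (xs i)))].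

Definition follows (x : traj) (n : nat) (P : nat -> pt R) : Prop :=
  [/\ (n <= tm x)%N,
      (forall j, (j < n)%N -> qq x j = P j) &
      exists2 s : R, 0 <= s <= 1 & P n = lerp (qq x n.-1) (qq x n) s].

End CellDefs.

From HB Require Import structures.
From mathcomp Require Import all_boot all_order all_algebra.
From mathcomp Require Import all_classical all_reals all_analysis.
From mathcomp Require Import ring lra zify.
Import Order.TTheory GRing.Theory Num.Theory.
Local Open Scope ring_scope.
Local Open Scope classical_set_scope.
Import numFieldNormedType.Exports.

(* Particle 0 is run along the path leg by leg, with speeds chosen one vertex
   at a time.  A specular reflection only rescales the speed.  At a vertex on the
   disk the normal component of the velocity is reversed and the tangential one is
   replaced by the spin of the disk, so the particle leaves along the next leg
   (which points away from the disk, by admissibility) as soon as the disk has the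
   appropriate spin.  That spin is provided by a driver: during each leg one driver
   enters through the left opening, hits the point of the disk nearest to it in the
   middle of the leg, handing over its tangential velocity as the new spin, and
   leaves through the left opening carrying the old spin away.  Short flights keep
   every driver within its leg's time window and its entry and exit points within
   the opening, so the collisions with the disk alternate between drivers and
   particle 0 and each of them sees the intended spin. *)

Section PlaneGeometry.
Variable R : realType.
Implicit Types (p q c d v w : pt R) (s t x y rho : R).

Lemma continuous_lerp p q : continuous (lerp p q).
Proof.
move=> s; have coord (u0 u1 : R) :
    (fun t : R => u0 + t * (u1 - u0) : R^o) @ s --> (u0 + s * (u1 - u0) : R^o).
  by apply: cvgD; [exact: cvg_cst | apply: cvgMl; exact: cvg_id].
exact: (cvg_pair (coord p.1 q.1) (coord p.2 q.2)).
Qed.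

Lemma lerp0 p q : lerp p q 0 = p.
Proof. by rewrite /lerp /padd /pscale !mul0r !addr0; case: p. Qed.

Lemma lerp1 p q : lerp p q 1 = q.
Proof. by case: p q => ? ? [? ?]; rewrite /lerp /padd /pscale /psub /=; congr pair; ring. Qed.

Lemma lerp_eq_end p q t : t != 1 -> lerp p q t = q -> p = q.
Proof.
move=> t1 /[dup] /(congr1 fst) + /(congr1 snd); case: p q => p1 p2 [q1 q2].
rewrite /lerp /padd /pscale /psub /= => E1 E2.
have t1' : 1 - t != 0 by rewrite subr_eq0 eq_sym.
have coord (u v : R) : u + t * (v - u) = v -> u = v.
  move=> E; have : (1 - t) * (u - v) == 0 by apply/eqP; rewrite -(subrr v) -{2}E; ring.
  by rewrite mulf_eq0 (negbTE t1') subr_eq0 => /eqP.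
by rewrite (coord _ _ E1) (coord _ _ E2).
Qed.

Lemma pscaleA x y v : pscale x (pscale y v) = pscale (x * y) v.
Proof. by rewrite /pscale /=; congr pair; ring. Qed.

Lemma reflZ nv w x : refl nv (pscale x w) = pscale x (refl nv w).
Proof. by rewrite /refl /pscale /psub /dot /=; congr pair; ring. Qed.

(* [dist2 (q + s d) c - rho^2 = s (2 D + s |d|^2)], with [D = d . (q - c)], is
   negative for small [s > 0] if [D < 0]. *)
Lemma circle_exit_dot_gt0 c rho q d : dist2 q c = rho ^+ 2 ->
  (forall s, 0 < s < 1 -> rho ^+ 2 <= dist2 (padd q (pscale s d)) c) ->
  dot d (psub q c) != 0 -> 0 < dot d (psub q c).
Proof.
move=> onC outside D0; set D := dot d (psub q c).
rewrite lt_neqAle eq_sym D0 leNgt /=; apply/negP => Dneg.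
have N0 : 0 <= dot d d by rewrite /dot; nra.
set N := dot d d in N0.
pose s := - D / (N - 2 * D).
have den : 0 < N - 2 * D by lra.
have s0 : 0 < s by rewrite divr_gt0 // oppr_gt0.
have s1 : s < 1 by rewrite ltr_pdivrMr // mul1r; lra.
have := outside s; rewrite s0 s1 => /(_ isT).
have -> : dist2 (padd q (pscale s d)) c = dist2 q c + s * (2 * D + s * N).
  by rewrite /dist2 /D /N /dot /padd /pscale /psub /=; ring.
suff : s * (2 * D + s * N) < 0 by rewrite onC; lra.
rewrite pmulr_rlt0 // (_ : 2 * D + s * N = (D * N - 4 * D ^+ 2) / (N - 2 * D)).
  by rewrite pmulr_llt0 ?invr_gt0 //; nra.
by rewrite /s; field; rewrite lt0r_neq0.
Qed.

End PlaneGeometry.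

Section DiskCollision.
Variables (R : realType) (C : cell R).
Hypothesis rD_neq0 : rD C != 0.

Lemma dot_en q v : dot v (en C q) = - (rD C)^-1 * dot v (psub q (dcen C)).
Proof. by rewrite /dot /en /pscale /psub /=; ring. Qed.

Lemma en_unit q : circD C q -> dot (en C q) (en C q) = 1.
Proof.
rewrite /en => E.
rewrite (_ : dot _ _ = (rD C)^-1 * (rD C)^-1 * dist2 q (dcen C)).
  by rewrite E; field.
by rewrite /dist2 /dot /pscale /psub /=; ring.
Qed.

Lemma disk_out_speed q w d y : circD C q -> - dot w (en C q) = y * dot d (en C q) ->
  disk_out C q w (y * dot d (et C q)) = pscale y d.
Proof.
move=> cq; rewrite /disk_out /et /rot90 /padd /pscale => ->.
move: (en_unit _ cq); move: (en C q) => e; rewrite /dot /= => e1.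
have unit_scale u : y * u = y * u * (e.1 * e.1 + e.2 * e.2) by rewrite e1 mulr1.
by congr pair; rewrite [RHS]unit_scale; ring.
Qed.

End DiskCollision.

Section CellGeometry.
Variables (R : realType) (C : cell R).
Hypothesis hC : cell_ok C.

Local Notation L := (cL C).
Local Notation a := (ca C).
Local Notation r := (rD C).

Lemma ca_gt0 : 0 < a. Proof. by case: hC => [[]]. Qed.
Lemma rD_gt0 : 0 < r. Proof. by case: hC => [[]]. Qed.

Lemma closed_box : closed (box C).
Proof. by case: hC => _ [] _ _ ? _. Qed.

Lemma bdry_box p : bdry (box C) p -> box C p.
Proof. by case; rewrite -(proj1 (closure_id _) closed_box). Qed.

Lemma opening_bdry p : opening C p -> bdry (box C) p.
Proof. by case: hC => _ _ [_ H] _ _ Hp; apply/H; left. Qed.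

Lemma walls_bdry p : walls C p -> bdry (box C) p.
Proof. by case: hC => _ _ [_ H] _ _ Hp; apply/H; right. Qed.

Lemma corner_bdry p : corner C p -> bdry (box C) p.
Proof.
case=> [[h _]|[[h _]|[[h _]|[j [k [jn _ _ h _]]]]]].
- by apply: opening_bdry; left.
- by apply: opening_bdry; right.
- by apply: opening_bdry; left.
- by apply: walls_bdry; exists j.
Qed.

Lemma circD_bdryN p : circD C p -> ~ bdry (box C) p.
Proof. by case: hC => _ _ _ _ [_ /seteqP[E _] _] cp bp; apply: (E p). Qed.

Lemma interior_dcen : interior (box C) (dcen C).
Proof.
case: hC => [[_ r0]] _ _ _ [H _ _]; apply: H.
by rewrite /diskD /dist2 /dot /psub /= !subrr mul0r addr0 exprn_ge0 // ltW.
Qed.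

(* By connectedness of the half-open segment from the centre to [z], which by
   assumption meets the boundary nowhere. *)
Lemma interior_lerp_dcen z s : bdry (box C) z -> 0 <= s < 1 ->
  interior (box C) (lerp (dcen C) z s).
Proof.
move=> bz /andP[s0 s1].
have zc : dcen C != z by apply/eqP => E; case: bz => _; rewrite -E; apply; exact: interior_dcen.
have box_interior t : 0 <= t < 1 -> box C (lerp (dcen C) z t) ->
    interior (box C) (lerp (dcen C) z t).
  move=> /andP[t0 t1] bt; apply: contrapT => nt.
  have bdt : bdry (box C) (lerp (dcen C) z t).
    by split=> //; rewrite -(proj1 (closure_id _) closed_box).
  case: hC => _ _ _ _ [_ _ segment_bdry].
  have := segment_bdry z t bz; rewrite t0 (ltW t1) => /(_ isT bdt).
  by move/lerp_eq_end => /(_ (negbT (lt_eqF t1))) /eqP; rewrite (negbTE zc).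
pose I := `[0, s] : set R.
pose Int := lerp (dcen C) z @^-1` interior (box C).
suff E : I `&` Int = I.
  have : I s by rewrite /I /= in_itv /= lexx s0.
  by rewrite -E => -[].
apply: (@segment_connected R 0 s).
- exists 0; split; first by rewrite /I /= in_itv /= lexx s0.
  by rewrite /Int /= lerp0; exact: interior_dcen.
- exists Int => //; apply: open_comp; last exact: open_interior.
  by move=> x _; exact: continuous_lerp.
- exists (lerp (dcen C) z @^-1` box C).
    apply: preimage_closed; last exact: closed_box.
    by move=> x _; exact: continuous_lerp.
  apply/seteqP; split=> t [It Ht]; split=> //=; first exact: interior_subset.
  apply: box_interior => //; move: It; rewrite /I /= in_itv /= => /andP[-> ts].
  exact: le_lt_trans ts s1.
Qed.

Lemma rD_lt_half_cL : r < L / 2.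
Proof.
have o : openL C (0, 0) by have := ca_gt0; split=> //=; apply/andP; split; lra.
have b0 : bdry (box C) (0, 0) by apply: opening_bdry; left.
have : box C (L / 2 - r, 0).
  case: hC => _ _ _ _ [H _ _]; apply: interior_subset; apply: H.
  by rewrite /diskD /dist2 /dot /psub /dcen /=; nra.
case: hC => _ _ [H _] _ _ /H /= /andP[h _].
rewrite lt_neqAle -subr_ge0 h andbT; apply/negP => /eqP E.
apply: (circD_bdryN _ _ b0).
by rewrite /circD /dist2 /dot /psub /dcen /= E; ring.
Qed.

Definition gap := L / 2 - r.

Lemma gap_gt0 : 0 < gap.
Proof. by rewrite /gap subr_gt0 rD_lt_half_cL. Qed.

Lemma cL_gt0 : 0 < L.
Proof. by have := rD_lt_half_cL; have := rD_gt0; lra. Qed.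

Lemma openL_Gam {y} : `|y| <= a -> openL C (0, y) /\ Gam C (0, y).
Proof.
move=> ya; have o : openL C (0, y) by split=> //=; rewrite -ler_norml.
split=> //; split; first by apply: bdry_box; apply: opening_bdry; left.
by rewrite /dist2 /dot /psub /dcen /=; have := rD_lt_half_cL; have := rD_gt0; nra.
Qed.

(* The segment from [(0, y)] to [(gap, 0)], the point of the disk nearest to the
   left opening. *)
Lemma intGam_to_disk y sig : `|y| <= a -> 0 < sig < 1 ->
  intGam C (sig * gap, (1 - sig) * y).
Proof.
move=> ya /andP[sig0 sig1].
have := cL_gt0; have := gap_gt0; have := rD_gt0; have := rD_lt_half_cL;
  have := ca_gt0; rewrite /gap => ap rL rp gp Lp.
pose s := (L - 2 * sig * gap) / L.
have s0 : 0 < s by rewrite /s /gap divr_gt0 //; nra.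
have s1 : s < 1 by rewrite /s /gap ltr_pdivrMr // mul1r; nra.
have o : openL C (0, (1 - sig) * y / s).
  split=> //=; rewrite -ler_norml normrM normfV (gtr0_norm s0) ler_pdivrMr //.
  rewrite normrM (ger0_norm (_ : 0 <= 1 - sig)); last lra.
  have : 1 - sig <= s by rewrite /s /gap ler_pdivlMr //; nra.
  by have := normr_ge0 y; nra.
have E : lerp (dcen C) (0, (1 - sig) * y / s) s = (sig * gap, (1 - sig) * y).
  by rewrite /lerp /padd /pscale /psub /dcen /s /gap /=; congr pair; field;
    rewrite lt0r_neq0 //; nra.
have interior_pt : interior (box C) (sig * gap, (1 - sig) * y).
  by rewrite -E; apply: interior_lerp_dcen; [apply: opening_bdry; left | rewrite (ltW s0)].
have outside : r ^+ 2 < dist2 (sig * gap, (1 - sig) * y) (dcen C).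
  have h : r < L / 2 - sig * gap by rewrite /gap; nra.
  have h2 : r ^+ 2 < (L / 2 - sig * gap) ^+ 2 by rewrite ltr_pXn2r // ?nnegrE; lra.
  rewrite /dist2 /dot /psub /dcen /= (_ : (sig * gap - L / 2) * (sig * gap - L / 2) =
    (L / 2 - sig * gap) ^+ 2); last by ring.
  by have := sqr_ge0 ((1 - sig) * y - 0); rewrite expr2; lra.
split; first by split; [exact: interior_subset | exact: ltW].
case=> [[_]|]; first by apply.
by rewrite /circD => h; move: outside; rewrite h ltxx.
Qed.

Section Driving.
Variables (n : nat) (P : nat -> pt R) (lam om0 : R).
Hypotheses (hA : admissible C n P) (lam_gt0 : 0 < lam).

Local Notation c := (dcen C).

Definition dir j := psub (P j.+1) (P j).

(* At a vertex on the disk, [y * (dir j . et)] is the spin that sends the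
   particle off along [dir j]; the drivers will give the disk this spin. *)
Definition speed_step j (x y : R) : Prop :=
  (exists2 k, (k < nb C)%N /\ arck C k (P j) &
      refl (psub (P j) (cen C k)) (pscale x (dir j.-1)) = pscale y (dir j))
  \/ (circD C (P j) /\
      disk_out C (P j) (pscale x (dir j.-1)) (y * dot (dir j) (et C (P j)))
      = pscale y (dir j)).

Fixpoint speed j :=
  if j is j'.+1 then xget 1 [set y | 0 < y /\ speed_step j'.+1 (speed j') y] else lam.

Lemma dir_pred j : (0 < j)%N -> dir j.-1 = psub (P j) (P j.-1).
Proof. by case: j. Qed.

Lemma intGam_leg {j s} : (j < n)%N -> 0 < s < 1 -> intGam C (lerp (P j) (P j.+1) s).
Proof. by case: hA => _ H _ _ _ jn s01; apply: (proj2 (H j jn)). Qed.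

Lemma leg_outside_disk {j s} : (j < n)%N -> 0 < s < 1 ->
  r ^+ 2 <= dist2 (lerp (P j) (P j.+1) s) c.
Proof. by move=> jn s01; case: (intGam_leg jn s01) => -[]. Qed.

Lemma dir_exit_disk j : (0 < j < n)%N -> circD C (P j) ->
  0 < dot (dir j) (psub (P j) c).
Proof.
move=> /andP[j0 jn] cj; apply: (@circle_exit_dot_gt0 R c r) => //.
  by move=> s s01; apply: leg_outside_disk jn s01.
by case: hA => _ _ _ _ /(_ j (ltnW jn) cj) [/(_ jn)].
Qed.

Lemma dir_enter_disk j : (0 < j < n)%N -> circD C (P j) ->
  dot (dir j.-1) (psub (P j) c) < 0.
Proof.
move=> /andP[j0 jn] cj.
have back v : dot (dir j.-1) v = - dot (psub (P j.-1) (P j)) v.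
  by rewrite dir_pred // /dot /psub /=; ring.
rewrite back oppr_lt0; apply: (@circle_exit_dot_gt0 R c r) => //.
  move=> s /andP[s0 s1].
  have -> : padd (P j) (pscale s (psub (P j.-1) (P j))) = lerp (P j.-1) (P j.-1.+1) (1 - s).
    by rewrite prednK // /lerp /padd /pscale /psub /=; congr pair; ring.
  by apply: leg_outside_disk; [lia | apply/andP; split; lra].
case: hA => _ _ _ _ /(_ j (ltnW jn) cj) [_ /(_ j0)].
by apply: contra; rewrite -dir_pred // back => /eqP ->; rewrite oppr0.
Qed.

Lemma speed_step_exists j x : (0 < j < n)%N -> 0 < x -> exists y, 0 < y /\ speed_step j x y.
Proof.
move=> jn x0; have [j0 _] := andP jn.
case: hA => _ _ [/(_ j jn) [bj|cj] reflection] [/(_ j jn) not_opening _] _.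
  have [k kn ak] : exists2 k, (k < nb C)%N & arck C k (P j).
    case: hC => _ _ [_ /(_ (P j)) [/(_ bj) [//|[k kn ak]] _]] _ _.
    by exists k.
  have [l l0 El] := reflection j jn bj k kn ak.
  exists (x / l); split; first by rewrite divr_gt0.
  left; exists k => //.
  by rewrite dir_pred // /dir El pscaleA reflZ divfK // lt0r_neq0.
have rp := rD_gt0.
have out : dot (dir j) (en C (P j)) < 0.
  by rewrite dot_en mulNr oppr_lt0 mulr_gt0 ?invr_gt0 ?dir_exit_disk.
have inw : 0 < dot (dir j.-1) (en C (P j)).
  by rewrite dot_en mulNr oppr_gt0 pmulr_rlt0 ?invr_gt0 ?dir_enter_disk.
exists (x * dot (dir j.-1) (en C (P j)) / - dot (dir j) (en C (P j))); split.
  by rewrite divr_gt0 ?mulr_gt0 // oppr_gt0.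
right; split=> //; apply: disk_out_speed => //; first by rewrite lt0r_neq0.
rewrite (_ : dot (pscale x _) _ = x * dot (dir j.-1) (en C (P j))).
  by field; rewrite lt_eqF.
by rewrite /dot /pscale /=; ring.
Qed.

Lemma speed_gt0 j : 0 < speed j.
Proof.
case: j => [//|j] /=.
have [[y Py]|no] := pselect (exists y, [set y | 0 < y /\ speed_step j.+1 (speed j) y] y).
  by case: (xgetPex 1 (ex_intro _ y Py)).
by rewrite xgetPN // => y Py; apply: no; exists y.
Qed.

Lemma speed_stepP {j} : (0 < j < n)%N -> speed_step j (speed j.-1) (speed j).
Proof.
case: j => [//|j] jn /=.
by case: (xgetPex 1 (@speed_step_exists j.+1 (speed j) jn (speed_gt0 j))).
Qed.

Definition leg j := (speed j)^-1.
Fixpoint arrival j := if j is j'.+1 then arrival j' + leg j' else 0.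
Definition vel j := pscale (speed j) (dir j).
Definition spin j := speed j * dot (dir j) (et C (P j)).

(* The spin of the disk just before [kick j]. *)
Definition spin_before j :=
  if j is j'.+1 then
    if `[< circD C (P j) >] then disk_vt C (P j) (vel j') else spin j
  else om0.

(* Driver [j] hits the disk at [kick j], in the middle of the [j]-th leg; the
   flight time is short enough to fit in that leg and to make the driver enter and
   leave through the left opening (see [flight_spin]). *)
Definition kick j := arrival j + leg j / 2.
Definition spin_bound j := 1 + `|spin j.+1| + `|spin_before j|.
Definition flight j := a * leg j / (4 * (a + leg j * spin_bound j)).

Lemma leg_gt0 j : 0 < leg j.
Proof. by rewrite invr_gt0 speed_gt0. Qed.

Lemma arrival_lt {j k} : (j < k)%N -> arrival j < arrival k.
Proof.
elim: k => [//|k IH]; rewrite ltnS leq_eqVlt => /orP[/eqP ->|jk] /=.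
  by rewrite ltrDl leg_gt0.
by rewrite (lt_trans (IH jk)) // ltrDl leg_gt0.
Qed.

Lemma arrival_le {j k} : (j <= k)%N -> arrival j <= arrival k.
Proof. by rewrite leq_eqVlt => /orP[/eqP ->//|/arrival_lt/ltW]. Qed.

Lemma spin_bound_ge1 j : 1 <= spin_bound j.
Proof.
by rewrite /spin_bound; have := normr_ge0 (spin j.+1); have := normr_ge0 (spin_before j); lra.
Qed.

Lemma flight_gt0 j : 0 < flight j.
Proof.
have := ca_gt0; have := leg_gt0 j; have := spin_bound_ge1 j => K1 lp ap.
by rewrite /flight divr_gt0 ?mulr_gt0 //; nra.
Qed.

Lemma flight_spin j :
  `|flight j * spin j.+1| <= a /\ `|flight j * spin_before j| <= a.
Proof.
have := ca_gt0; have := leg_gt0 j; have := spin_bound_ge1 j => K1 lp ap.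
suff bound x : `|x| <= spin_bound j -> `|flight j * x| <= a.
  have := normr_ge0 (spin j.+1); have := normr_ge0 (spin_before j).
  by move=> *; split; apply: bound; rewrite /spin_bound; lra.
move=> xK; have h : leg j * `|x| <= leg j * spin_bound j by rewrite ler_pM2l.
have K0 : 0 <= leg j * spin_bound j by rewrite mulr_ge0 ?ltW //; lra.
rewrite normrM gtr0_norm ?flight_gt0 // /flight mulrAC ler_pdivrMr; last lra.
by rewrite -mulrA ler_pM2l //; lra.
Qed.

Lemma flight_le_leg j : flight j <= leg j / 4.
Proof.
have := ca_gt0; have := leg_gt0 j; have := spin_bound_ge1 j => K1 lp ap.
by rewrite /flight ler_pdivrMr ?mulr_gt0; nra.
Qed.

Lemma kick_window j : arrival j < kick j - flight j /\ kick j + flight j < arrival j.+1.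
Proof. by have := flight_le_leg j; have := leg_gt0 j; rewrite /kick /=; lra. Qed.

Lemma arrival_lt_kick {k j} : (k <= j)%N -> arrival k < kick j.
Proof.
move/arrival_le/le_lt_trans; apply.
by have := kick_window j; have := flight_gt0 j; lra.
Qed.

Lemma kick_lt_arrival {j k} : (j < k)%N -> kick j < arrival k.
Proof.
move/arrival_le/(lt_le_trans _); apply.
by have := kick_window j; have := flight_gt0 j; lra.
Qed.

Lemma kick_lt j j' : (j < j')%N -> kick j < kick j'.
Proof. by move=> jj; exact: lt_trans (kick_lt_arrival jj) (arrival_lt_kick (leqnn j')). Qed.

Definition leftmost : pt R := (gap, 0).

Definition driver j : traj R := Traj 2
  (fun k => match k with 0 => kick j - flight j | 1 => kick j | _ => kick j + flight j end)
  (fun k => match k with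
            | 0 => ((0 : R^o), - (flight j * spin j.+1))
            | 1 => leftmost
            | _ => ((0 : R^o), flight j * spin_before j) end)
  (fun k => match k with
            | 0 => ((gap / flight j : R^o), spin j.+1)
            | _ => ((- (gap / flight j) : R^o), spin_before j) end).

Definition particle : traj R := Traj n arrival P vel.
Definition system i := if i is j.+1 then driver j else particle.

Lemma leftmost_circD : circD C leftmost.
Proof. by rewrite /circD /dist2 /dot /psub /leftmost /gap /dcen /=; ring. Qed.

Lemma en_leftmost : en C leftmost = (1, 0).
Proof.
have r0 : r != 0 by rewrite lt0r_neq0 // rD_gt0.
by rewrite /en /pscale /psub /leftmost /gap /dcen /=; congr pair; field.
Qed.

Lemma disk_vt_driver j : ev_vt C system j.+1 1 = spin j.+1.
Proof. by rewrite /ev_vt /= /disk_vt /et en_leftmost /rot90 /dot /=; ring. Qed.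

Local Notation event := (disk_event C n.-1 system).

Lemma disk_eventP i k : event i k ->
  (i = 0%N /\ (0 < k < n)%N /\ circD C (P k)) \/ exists2 j, i = j.+1 & (j < n.-1)%N /\ k = 1%N.
Proof.
case: i => [|j] [iN kt ck]; first by left.
by right; exists j => //; split=> //; move: kt => /=; lia.
Qed.

Lemma driver_event {j} : (j < n.-1)%N -> event j.+1 1.
Proof. by split=> //; exact: leftmost_circD. Qed.

(* Chronological order of the disk collisions: driver [j] comes between the
   visits of particle 0 to [P j] and [P j.+1]. *)
Definition event_rank i k := if i is j.+1 then (2 * j).+1 else (2 * k)%N.

Lemma event_rank_gt0 {i k} : event i k -> (0 < event_rank i k)%N.
Proof. by move/disk_eventP => [[-> [/andP[k0 _] _]]|[j -> _]] /=; lia. Qed.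

Lemma event_rank_lt_time {i k i' k'} : event i k -> event i' k' ->
  (event_rank i k < event_rank i' k')%N -> ev_time system i k < ev_time system i' k'.
Proof.
move=> /disk_eventP [[-> _]|[j -> [_ ->]]] /disk_eventP [[-> _]|[j' -> [_ ->]]] /= lt; rewrite /ev_time /=.
- by apply: arrival_lt; lia.
- by apply: arrival_lt_kick; lia.
- by apply: kick_lt_arrival; lia.
- by apply: kick_lt; lia.
Qed.

Lemma event_rank_inj {i k i' k'} : event i k -> event i' k' ->
  event_rank i k = event_rank i' k' -> i = i' /\ k = k'.
Proof.
move=> /disk_eventP [[-> _]|[j -> [_ ->]]] /disk_eventP [[-> _]|[j' -> [_ ->]]] /= E;
  by split=> //; lia.
Qed.

Lemma time_lt_event_rank {i k i' k'} : event i k -> event i' k' ->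
  ev_time system i k < ev_time system i' k' -> (event_rank i k < event_rank i' k')%N.
Proof.
move=> e e' lt; rewrite ltnNge leq_eqVlt; apply/negP => /orP[/eqP E|lt'].
  by have [? ?] := event_rank_inj e' e E; subst; rewrite ltxx in lt.
by have := event_rank_lt_time e' e lt'; rewrite ltNge (ltW lt).
Qed.

Lemma event_rank_le_time {i k i' k'} : event i k -> event i' k' ->
  (event_rank i k <= event_rank i' k')%N -> ev_time system i k <= ev_time system i' k'.
Proof.
move=> e e'; rewrite leq_eqVlt => /orP[/eqP E|lt].
  by have [-> ->] := event_rank_inj e e' E.
exact/ltW/(event_rank_lt_time e e' lt).
Qed.

Lemma omega_before_last_event {i k i0 k0} : event i k -> event i0 k0 ->
  (event_rank i k < event_rank i0 k0)%N ->
  (forall i' k', event i' k' -> (event_rank i' k' < event_rank i0 k0)%N ->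
     (event_rank i' k' <= event_rank i k)%N) ->
  omega_before C n.-1 system om0 (ev_time system i0 k0) (ev_vt C system i k).
Proof.
move=> e e0 lt last; right; exists i, k; split=> //.
  exact: event_rank_lt_time.
move=> i' k' e' /(time_lt_event_rank e' e0) /(last _ _ e').
exact: event_rank_le_time.
Qed.

Lemma omega_before_vertex k : (0 < k < n)%N -> circD C (P k) ->
  omega_before C n.-1 system om0 (arrival k) (spin k).
Proof.
case: k => [//|k] kn ck.
have ek : event k.+1 1 by apply: driver_event; lia.
rewrite -disk_vt_driver.
by apply: (omega_before_last_event (i0 := 0%N) (k0 := k.+1)) => //= [|i' k' _]; lia.
Qed.

Lemma omega_before_kick j : (j < n.-1)%N ->
  omega_before C n.-1 system om0 (kick j) (spin_before j).
Proof.
move=> jn; have ej := driver_event jn.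
case: j jn ej => [|j] jn ej.
  left; split=> // i k e.
  by apply: (event_rank_le_time ej e); have := event_rank_gt0 e.
rewrite /spin_before; case: asboolP => [cj|ncj].
  have e0 : event 0 j.+1 by split=> //=; lia.
  by apply: (omega_before_last_event e0 ej) => /= [|i' k' _]; lia.
have e1 : event j.+1 1 by apply: driver_event; lia.
rewrite -disk_vt_driver; apply: (omega_before_last_event e1 ej) => /=; first lia.
move=> i' k' /disk_eventP [[-> [_ ck']]|[j' -> _]] /=; last lia.
have : k' <> j.+1 by move=> E; apply: ncj; rewrite -E.
lia.
Qed.

Local Notation omega := (omega_before C n.-1 system om0).

Lemma valid_particle : valid_traj C omega (arrival n) particle.
Proof.
case: (hA) => [[_ Gam_P]] _ _ [not_opening no_corner] _.
split=> //=; first exact: Gam_P.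
- move=> k kn; have sp := speed_gt0 k.
  have step : arrival k + leg k - arrival k = leg k by ring.
  split; first by rewrite ltrDl leg_gt0.
    by rewrite step /vel pscaleA /leg mulVf ?lt0r_neq0 // -(@lerp1 R (P k) (P k.+1)).
  move=> s /andP[s1 s2]; rewrite /vel pscaleA; apply: intGam_leg => //.
  rewrite /leg in s2; apply/andP; split; first by rewrite mulr_gt0 // subr_gt0.
  by rewrite -ltr_pdivlMr // div1r; lra.
- move=> k kn; split; [apply: no_corner; lia | exact: not_opening |].
  case: (speed_stepP kn) => [[k' k'P E]|[ck E]]; first by left; exists k'.
  by right; split=> //; exists (spin k) => //; apply: omega_before_vertex.
- by right.
Qed.

Lemma valid_driver j : (j < n.-1)%N -> valid_traj C omega (arrival n) (driver j).
Proof.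
move=> jn; have fp := flight_gt0 j; have gp := gap_gt0.
have [win_lo win_hi] := kick_window j; have [inL outL] := flight_spin j.
rewrite -normrN in inL.
have f0 : flight j != 0 by rewrite lt0r_neq0.
split=> /=.
- by case: (openL_Gam inL).
- case=> [|[|k]] // _; split; first (by lra).
  + by rewrite /padd /pscale /leftmost /=; congr pair; field.
  + move=> s /andP[s1 s2].
    pose sig := (s - (kick j - flight j)) / flight j.
    have -> : padd ((0 : R^o), - (flight j * spin j.+1))
        (pscale (s - (kick j - flight j)) ((gap / flight j : R^o), spin j.+1))
        = (sig * gap, (1 - sig) * - (flight j * spin j.+1)).
      by rewrite /padd /pscale /sig /=; congr pair; field.
    apply: intGam_to_disk => //.
    by rewrite divr_gt0 ?subr_gt0 //= ltr_pdivrMr // mul1r; lra.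
  + lra.
  + by rewrite /padd /pscale /leftmost /=; congr pair; field.
  + move=> s /andP[s1 s2].
    pose sig := 1 - (s - kick j) / flight j.
    have -> : padd leftmost (pscale (s - kick j) ((- (gap / flight j) : R^o), spin_before j))
        = (sig * gap, (1 - sig) * (flight j * spin_before j)).
      by rewrite /padd /pscale /sig /leftmost /=; congr pair; field.
    apply: intGam_to_disk => //.
    have : 0 < (s - kick j) / flight j < 1.
      by rewrite divr_gt0 ?subr_gt0 //= ltr_pdivrMr // mul1r; lra.
    by rewrite /sig; lra.
- case=> [|[|k]] // _; split.
  + by move/corner_bdry; apply: circD_bdryN leftmost_circD.
  + by move/opening_bdry; apply: circD_bdryN leftmost_circD.
  + right; split; first exact: leftmost_circD.
    exists (spin_before j); first exact: omega_before_kick.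
    by rewrite /disk_out /et en_leftmost /rot90 /padd /pscale /dot /=; congr pair; ring.
- by left; split=> //; left; case: (openL_Gam outL).
- by apply/ltW/(lt_le_trans win_hi)/arrival_le; lia.
Qed.

Lemma driver_okP j : (j < n.-1)%N -> driver_ok C n.-1 system j.+1.
Proof.
move=> jn; have [win_lo _] := kick_window j; have [inL outL] := flight_spin j.
rewrite -normrN in inL.
split=> /=.
- split=> /=; first by have := arrival_le (leq0n j); rewrite /=; lra.
  left; split; first by case: (openL_Gam inL).
  by rewrite divr_gt0 ?gap_gt0 ?flight_gt0.
- exists 1%N; split; first exact: driver_event.
  by move=> k' [_ /= k'1 _]; lia.
- by [].
- by left; case: (openL_Gam outL).
Qed.

Lemma valid_system : valid_history C om0 (arrival n) n.-1 system.
Proof.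
split=> [[|j] jn|i k i' k' e e' E]; first exact: valid_particle.
  exact: valid_driver.
apply: (event_rank_inj e e').
case: (ltngtP (event_rank i k) (event_rank i' k')) => // lt.
  by move: (event_rank_lt_time e e' lt); rewrite E ltxx.
by move: (event_rank_lt_time e' e lt); rewrite E ltxx.
Qed.

End Driving.
End CellGeometry.

Theorem proposition1 (R : realType) (C : cell R) (n : nat) (P : nat -> pt R)
    (v0 : pt R) (om0 : R) :
  cell_ok C -> admissible C n P ->
  (exists2 lam : R, 0 < lam & v0 = pscale lam (psub (P 1%N) (P 0%N))) ->
  exists (N : nat) (xs : nat -> traj R) (H : R),
    [/\ valid_history C om0 H N xs,
        [/\ tt (xs 0%N) 0 = 0, qq (xs 0%N) 0 = P 0%N & ww (xs 0%N) 0 = v0],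
        (forall i, (0 < i <= N)%N -> driver_ok C N xs i),
        follows (xs 0%N) n P &
        (opening C (P n) ->
           tm (xs 0%N) = n /\ qq (xs 0%N) n = P n)].
Proof.
move=> hC hA [lam lam_gt0 ->].
exists n.-1, (@system R C n P lam om0), (@arrival R C P lam n); split.
- exact: valid_system.
- by [].
- by case=> [//|j] jn; apply: driver_okP.
- by split=> //=; exists 1; [rewrite ler01 lexx | rewrite lerp1].
- by [].
Qed.
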